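(* Let $\mathbf{X}\in\mathbb{R}^{n\times p}$, $\mathbf{A}\in\mathbb{R}^n$ with $\mathbf{A}\neq\mathbf{0}$, and $\mathbf{Y}\in\mathbb{R}^n$ be given, and define $\mathbf{Q}_A=I_n-\mathbf{A}\mathbf{A}^\top/\|\mathbf{A}\|^2$, $\mathbf{Z}=\mathbf{Q}_A\mathbf{X}$, $\mathbf{a}=\mathbf{X}^\top\mathbf{A}$, $\mathbf{z}=\mathbf{X}^\top\mathbf{Y}-\frac{\mathbf{A}^\top\mathbf{Y}}{\|\mathbf{A}\|^2}\mathbf{a}$ $(=\mathbf{Z}^\top\mathbf{Y})$, and $\mathbf{V}=\mathbf{X}^\top\mathbf{X}-\mathbf{a}\mathbf{a}^\top/\|\mathbf{A}\|^2$ $(=\mathbf{Z}^\top\mathbf{Z})$. Assume $\mathbf{V}$ is positive definite and let $\mathbf{p}=\mathbf{V}^{-1}\mathbf{a}$, $\mathbf{q}=\mathbf{V}^{-1}\mathbf{z}$, both assumed nonzero. Equip $\mathbb{R}^p$ with the inner product $\langle\mathbf{u}_1,\mathbf{u}_2\rangle_{\mathbf{V}}=\mathbf{u}_1^\top\mathbf{V}\mathbf{u}_2$, norm $\|\mathbf{u}\|_{\mathbf{V}}=\sqrt{\mathbf{u}^\top\mathbf{V}\mathbf{u}}$, and angle $\angle_{\mathbf{V}}(\mathbf{u}_1,\mathbf{u}_2)$ defined by $\cos\angle_{\mathbf{V}}(\mathbf{u}_1,\mathbf{u}_2)=\langle\mathbf{u}_1,\mathbf{u}_2\rangle_{\mathbf{V}}/(\|\mathbf{u}_1\|_{\mathbf{V}}\|\mathbf{u}_2\|_{\mathbf{V}})$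 for nonzero vectors. Let $\varphi=\angle_{\mathbf{V}}(\mathbf{p},\mathbf{q})$. Then, over nonzero $\mathbf{w}\in\mathbb{R}^p$, the alignment $\cos\angle_{\mathbf{V}}(\mathbf{w},\mathbf{p})\cdot\cos\angle_{\mathbf{V}}(\mathbf{w},\mathbf{q})$ is maximised by the direction $\mathbf{w}^*$ that bisects the angle between $\mathbf{p}$ and $\mathbf{q}$, i.e. $\angle_{\mathbf{V}}(\mathbf{w}^*,\mathbf{p})=\angle_{\mathbf{V}}(\mathbf{w}^*,\mathbf{q})=\varphi/2$, and for the function $$h(\mathbf{w})=\frac{(\mathbf{w}^\top\mathbf{a})(\mathbf{w}^\top\mathbf{z})}{\|\mathbf{A}\|^2\,(\mathbf{w}^\top\mathbf{V}\mathbf{w})}$$ one has $$h(\mathbf{w}^* )=\frac{\|\mathbf{p}\|_{\mathbf{V}}\|\mathbf{q}\|_{\mathbf{V}}}{\|\mathbf{A}\|^2}\cdot\frac{1+\cos\varphi}{2}.$$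
   Context: $\mathbf{X}$ is a matrix of candidate mediators, $\mathbf{A}$ a treatment vector and $\mathbf{Y}$ an outcome vector (all column-centred). For a weight vector $\mathbf{w}$, the OLS path coefficients of the composite mediator $\mathbf{X}\mathbf{w}$ are $\hat\alpha(\mathbf{w})=\mathbf{w}^\top\mathbf{a}/\|\mathbf{A}\|^2$ and $\hat\beta(\mathbf{w})=\mathbf{w}^\top\mathbf{z}/(\mathbf{w}^\top\mathbf{V}\mathbf{w})$, so $h(\mathbf{w})=\hat\alpha(\mathbf{w})\hat\beta(\mathbf{w})$ is the sample indirect effect; $h$ is invariant under rescaling of $\mathbf{w}$ by nonzero scalars. The identity $h(\mathbf{w})=\frac{\|\mathbf{p}\|_{\mathbf{V}}\|\mathbf{q}\|_{\mathbf{V}}}{\|\mathbf{A}\|^2}\cos\angle_{\mathbf{V}}(\mathbf{w},\mathbf{p})\cos\angle_{\mathbf{V}}(\mathbf{w},\mathbf{q})$ holds for nonzero $\mathbf{w}$. *)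

From HB Require Import structures.
From mathcomp Require Import all_boot all_order all_algebra.
From mathcomp Require Import all_classical all_reals all_analysis.
Set Implicit Arguments. Unset Strict Implicit. Unset Printing Implicit Defensive.
Import Order.TTheory GRing.Theory Num.Theory.
Local Open Scope ring_scope.

Section Defs.
Variables (R : realType) (n p : nat).

Definition sqnorm (A : 'cV[R]_n) : R := (A^T *m A) 0 0.

(* Q_A = I_n - A A^T / ||A||^2 and Z = Q_A X (not needed for the statement,
   recorded for reference; z and V are defined by the paper's explicit formulas) *)
Definition QA (A : 'cV[R]_n) : 'M[R]_n := 1%:M - (sqnorm A)^-1 *: (A *m A^T).
Definition Zmat (X : 'M[R]_(n, p)) (A : 'cV[R]_n) : 'M[R]_(n, p) := QA A *m X.

Definition avec (X : 'M[R]_(n, p)) (A : 'cV[R]_n) : 'cV[R]_p := X^T *m A.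
Definition zvec (X : 'M[R]_(n, p)) (A Y : 'cV[R]_n) : 'cV[R]_p :=
  X^T *m Y - ((A^T *m Y) 0 0 / sqnorm A) *: avec X A.
Definition Vmat (X : 'M[R]_(n, p)) (A : 'cV[R]_n) : 'M[R]_p :=
  X^T *m X - (sqnorm A)^-1 *: (avec X A *m (avec X A)^T).

Definition posdef (V : 'M[R]_p) : Prop :=
  forall u : 'cV[R]_p, u != 0 -> 0 < (u^T *m V *m u) 0 0.

Definition vdot (V : 'M[R]_p) (u1 u2 : 'cV[R]_p) : R := (u1^T *m V *m u2) 0 0.
Definition vnorm (V : 'M[R]_p) (u : 'cV[R]_p) : R := Num.sqrt (vdot V u u).
Definition vcos (V : 'M[R]_p) (u1 u2 : 'cV[R]_p) : R :=
  vdot V u1 u2 / (vnorm V u1 * vnorm V u2).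
Definition vangle (V : 'M[R]_p) (u1 u2 : 'cV[R]_p) : R := acos (vcos V u1 u2).

Definition hfun (X : 'M[R]_(n, p)) (A Y : 'cV[R]_n) (w : 'cV[R]_p) : R :=
  ((w^T *m avec X A) 0 0 * (w^T *m zvec X A Y) 0 0)
  / (sqnorm A * vdot (Vmat X A) w w).
End Defs.

(* In the V-geometry, h(w) is |p| |q| / ||A||^2 times the alignment
   cos(w, p) cos(w, q).  Writing x, y for these two cosines and b for the sum of
   the V-unit vectors along p and q, Cauchy-Schwarz applied to w and b gives
   (x + y)^2 <= |b|^2 = 2 (1 + cos phi), so xy <= (x + y)^2 / 4 <= (1 + cos phi) / 2.
   The bound is attained at the bisector b, whose cosine with p and with q is
   sqrt((1 + cos phi) / 2) = cos (phi / 2). *)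
From HB Require Import structures.
From mathcomp Require Import all_boot all_order all_algebra.
From mathcomp Require Import all_classical all_reals all_analysis.
From mathcomp Require Import ring lra.
Set Implicit Arguments. Unset Strict Implicit. Unset Printing Implicit Defensive.
Import Order.TTheory GRing.Theory Num.Theory.
Local Open Scope ring_scope.

Lemma cos_half_acos (R : realType) (c : R) : -1 <= c <= 1 ->
  cos (acos c / 2) = Num.sqrt ((1 + c) / 2).
Proof.
move=> c_bound; set t := acos c / 2.
have t_ge0 : 0 <= t by rewrite /t divr_ge0 ?acos_ge0.
have t_le_pihalf : t <= pi / 2 by rewrite /t ler_pM2r ?acos_lepi.
have cos_t_ge0 : 0 <= cos t.
  by have := @pi_gt0 R => pi_gt0; apply: cos_ge0_pihalf; apply/andP; split; lra.
have cos_2t : cos t ^+ 2 - sin t ^+ 2 = c.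
  have -> : c = cos (t + t) by rewrite -splitr acosK ?in_itv.
  by rewrite cosD !expr2.
have sin2cos2t := sin2cos2 t.
apply/eqP; rewrite -(eqrXn2 (n := 2)) ?sqrtr_ge0 // sqr_sqrtr; last lra.
by apply/eqP; lra.
Qed.

Lemma div_sqrt_double (R : rcfType) (x : R) : 0 < x -> x / Num.sqrt (2 * x) = Num.sqrt (x / 2).
Proof.
move=> x_gt0; have x2_gt0 : 0 < 2 * x by rewrite mulr_gt0.
apply/eqP; rewrite -(eqrXn2 (n := 2)) ?sqrtr_ge0 ?divr_ge0 ?sqrtr_ge0 ?ltW //.
rewrite expr_div_n !sqr_sqrtr ?divr_ge0 ?ltW //.
by apply/eqP; field; rewrite gt_eqF.
Qed.

Section VGeometry.
Variables (R : realType) (p : nat) (V : 'M[R]_p).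
Implicit Types u w : 'cV[R]_p.

Lemma vdotDl u1 u2 w : vdot V (u1 + u2) w = vdot V u1 w + vdot V u2 w.
Proof. by rewrite /vdot linearD /= !mulmxDl !mxE. Qed.

Lemma vdotZl k u w : vdot V (k *: u) w = k * vdot V u w.
Proof. by rewrite /vdot linearZ /= -!scalemxAl !mxE. Qed.

Lemma vdotDr w u1 u2 : vdot V w (u1 + u2) = vdot V w u1 + vdot V w u2.
Proof. by rewrite /vdot mulmxDr !mxE. Qed.

Lemma vdotZr k w u : vdot V w (k *: u) = k * vdot V w u.
Proof. by rewrite /vdot -!scalemxAr !mxE. Qed.

Lemma vdot0l w : vdot V 0 w = 0.
Proof. by rewrite /vdot trmx0 !mul0mx mxE. Qed.

Lemma vdot0r w : vdot V w 0 = 0.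
Proof. by rewrite /vdot mulmx0 mxE. Qed.

Lemma vdot_invmx w b : V \in unitmx -> vdot V w (invmx V *m b) = (w^T *m b) 0 0.
Proof. by move=> V_unit; rewrite /vdot -mulmxA mulKVmx. Qed.

Hypothesis V_sym : V^T = V.

Lemma vdotC u w : vdot V u w = vdot V w u.
Proof.
by rewrite /vdot -[in LHS](trmxK (_ *m w)) [in LHS]mxE !trmx_mul trmxK V_sym mulmxA.
Qed.

Hypothesis V_posdef : posdef V.

Lemma posdef_unitmx : V \in unitmx.
Proof.
rewrite unitmxE unitfE; apply/negP => /det0P [v v_neq0 vV0].
by have := V_posdef (u := v^T); rewrite trmxK vV0 mul0mx mxE ltxx trmx_eq0 v_neq0 => /(_ isT).
Qed.

Lemma vdot_ge0 u : 0 <= vdot V u u.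
Proof. by have [->|/V_posdef/ltW] := eqVneq u 0; rewrite ?vdot0l. Qed.

Lemma vnorm_gt0 u : u != 0 -> 0 < vnorm V u.
Proof. by move=> /V_posdef; rewrite sqrtr_gt0. Qed.

Lemma sqr_vnorm u : vnorm V u ^+ 2 = vdot V u u.
Proof. by rewrite sqr_sqrtr ?vdot_ge0. Qed.

Lemma vdot_CauchySchwarz u w : vdot V u w ^+ 2 <= vdot V u u * vdot V w w.
Proof.
have [->|w_neq0] := eqVneq w 0; first by rewrite !vdot0r expr0n mulr0.
have ww_gt0 : 0 < vdot V w w := V_posdef w_neq0.
have := vdot_ge0 (vdot V w w *: u + (- vdot V u w) *: w).
rewrite !(vdotDl, vdotDr, vdotZl, vdotZr) (vdotC w u) => sq_ge0.
nra.
Qed.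

Lemma vcos_bound u w : u != 0 -> w != 0 -> -1 <= vcos V u w <= 1.
Proof.
move=> /vnorm_gt0 u_gt0 /vnorm_gt0 w_gt0.
have := vdot_CauchySchwarz u w; rewrite -!sqr_vnorm /vcos.
have uw_gt0 : 0 < vnorm V u * vnorm V w by rewrite mulr_gt0.
rewrite ler_pdivrMr // ler_pdivlMr // => CS.
apply/andP; split; nra.
Qed.

Lemma vcos_vangle u w : u != 0 -> w != 0 -> cos (vangle V u w) = vcos V u w.
Proof. by move=> u_neq0 w_neq0; rewrite acosK ?in_itv ?vcos_bound. Qed.

Lemma vcos_mulE w u1 u2 : w != 0 -> u1 != 0 -> u2 != 0 ->
  vnorm V u1 * vnorm V u2 * (vcos V w u1 * vcos V w u2)
  = vdot V w u1 * vdot V w u2 / vdot V w w.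
Proof.
move=> /vnorm_gt0 ? /vnorm_gt0 ? /vnorm_gt0 ?.
by rewrite -sqr_vnorm /vcos; field; rewrite !gt_eqF.
Qed.

Definition bisector u1 u2 := (vnorm V u1)^-1 *: u1 + (vnorm V u2)^-1 *: u2.

Lemma vdot_bisector w u1 u2 :
  vdot V w (bisector u1 u2) = vdot V w u1 / vnorm V u1 + vdot V w u2 / vnorm V u2.
Proof. by rewrite vdotDr !vdotZr mulrC [_^-1 * _]mulrC. Qed.

Section Bisector.
Variables u1 u2 : 'cV[R]_p.
Hypotheses (u1_neq0 : u1 != 0) (u2_neq0 : u2 != 0).
Local Notation c := (vcos V u1 u2).

Lemma vdot_bisectorl : vdot V u1 (bisector u1 u2) = vnorm V u1 * (1 + c).
Proof.
have := vnorm_gt0 u1_neq0; have := vnorm_gt0 u2_neq0.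
by rewrite vdot_bisector -sqr_vnorm /vcos => ? ?; field; rewrite !gt_eqF.
Qed.

Lemma vdot_bisectorr : vdot V u2 (bisector u1 u2) = vnorm V u2 * (1 + c).
Proof.
have := vnorm_gt0 u1_neq0; have := vnorm_gt0 u2_neq0.
by rewrite vdot_bisector vdotC -sqr_vnorm /vcos => ? ?; field; rewrite !gt_eqF.
Qed.

Lemma vdot_bisector_self : vdot V (bisector u1 u2) (bisector u1 u2) = 2 * (1 + c).
Proof.
have := vnorm_gt0 u1_neq0; have := vnorm_gt0 u2_neq0.
rewrite {1}/bisector vdotDl !vdotZl vdot_bisectorl vdot_bisectorr => ? ?.
by field; rewrite !gt_eqF.
Qed.

Lemma vcos_mul_le w : w != 0 -> vcos V w u1 * vcos V w u2 <= (1 + c) / 2.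
Proof.
move=> w_neq0; have := vdot_CauchySchwarz w (bisector u1 u2).
rewrite vdot_bisector vdot_bisector_self -sqr_vnorm.
have := vnorm_gt0 u1_neq0; have := vnorm_gt0 u2_neq0; have := vnorm_gt0 w_neq0.
set x := vcos V w u1; set y := vcos V w u2 => w_gt0 ? ?.
have -> : vdot V w u1 / vnorm V u1 + vdot V w u2 / vnorm V u2 = vnorm V w * (x + y).
  by rewrite /x /y /vcos; field; rewrite !gt_eqF.
rewrite exprMn ler_pM2l ?exprn_gt0 // => CS.
by have := sqr_ge0 (x - y); nra.
Qed.

Hypothesis c_gtN1 : -1 < c.

Lemma bisector_neq0 : bisector u1 u2 != 0.
Proof.
apply/eqP => b0; have := vdot_bisector_self; rewrite b0 vdot0l.
(* [lra] does not look at section hypotheses, hence the explicit [have]. *)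
by have := c_gtN1; lra.
Qed.

Let vangle_bisector u : u != 0 -> vdot V (bisector u1 u2) u = vnorm V u * (1 + c) ->
  vangle V (bisector u1 u2) u = vangle V u1 u2 / 2.
Proof.
move=> u_neq0 bu; have c_bound := vcos_bound u1_neq0 u2_neq0.
have c1_gt0 : 0 < 1 + c by have := c_gtN1; lra.
have cos_half : vcos V (bisector u1 u2) u = cos (vangle V u1 u2 / 2).
  rewrite {1}/vcos bu {2}/vnorm vdot_bisector_self cos_half_acos // -div_sqrt_double //.
  have := vnorm_gt0 u_neq0 => u_gt0.
  have b_gt0 : 0 < Num.sqrt (2 * (1 + c)) by rewrite sqrtr_gt0 mulr_gt0.
  by field; rewrite !gt_eqF.
rewrite {1}/vangle cos_half cosK // in_itv /= /vangle.
have := acos_ge0 c_bound; have := acos_lepi c_bound; have := @pi_gt0 R.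
lra.
Qed.

Lemma vangle_bisectorl : vangle V (bisector u1 u2) u1 = vangle V u1 u2 / 2.
Proof. by apply: vangle_bisector; rewrite // vdotC vdot_bisectorl. Qed.

Lemma vangle_bisectorr : vangle V (bisector u1 u2) u2 = vangle V u1 u2 / 2.
Proof. by apply: vangle_bisector; rewrite // vdotC vdot_bisectorr. Qed.

End Bisector.

End VGeometry.

Section Mediation.
Variables (R : realType) (n p : nat) (X : 'M[R]_(n, p)) (A Y : 'cV[R]_n).
Local Notation V := (Vmat X A).
Local Notation pv := (invmx V *m avec X A).
Local Notation qv := (invmx V *m zvec X A Y).

Lemma Vmat_sym : V^T = V.
Proof. by rewrite /Vmat linearB /= linearZ /= !trmx_mul !trmxK. Qed.

Lemma hfunE w : posdef V -> w != 0 -> pv != 0 -> qv != 0 ->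
  hfun X A Y w = vnorm V pv * vnorm V qv / sqnorm A * (vcos V w pv * vcos V w qv).
Proof.
move=> V_posdef w_neq0 pv_neq0 qv_neq0.
rewrite mulrAC vcos_mulE ?Vmat_sym // !vdot_invmx ?posdef_unitmx //.
by rewrite /hfun invfM; ring.
Qed.

End Mediation.

Theorem proposition1 (R : realType) (n p : nat)
    (X : 'M[R]_(n, p)) (A Y : 'cV[R]_n) :
  let V := Vmat X A in
  let pv := invmx V *m avec X A in
  let qv := invmx V *m zvec X A Y in
  let phi := vangle V pv qv in
  A != 0 -> posdef V -> pv != 0 -> qv != 0 ->
  (forall ws : 'cV[R]_p, ws != 0 ->
     vangle V ws pv = phi / 2 -> vangle V ws qv = phi / 2 ->
     (forall w : 'cV[R]_p, w != 0 ->
        vcos V w pv * vcos V w qv <= vcos V ws pv * vcos V ws qv)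
     /\ hfun X A Y ws
        = vnorm V pv * vnorm V qv / sqnorm A * ((1 + cos phi) / 2))
  /\ (-1 < vcos V pv qv ->
      exists ws : 'cV[R]_p, ws != 0 /\
        vangle V ws pv = phi / 2 /\ vangle V ws qv = phi / 2).
Proof.
move=> V pv qv phi _ V_posdef pv_neq0 qv_neq0.
have V_sym : V^T = V := Vmat_sym X A.
have c_bound := vcos_bound V_sym V_posdef pv_neq0 qv_neq0.
have cos_phi : cos phi = vcos V pv qv by rewrite vcos_vangle.
split=> [ws ws_neq0 ws_pv ws_qv | c_gtN1].
  have alignment : vcos V ws pv * vcos V ws qv = (1 + cos phi) / 2.
    rewrite -!vcos_vangle // ws_pv ws_qv -expr2 cos_phi /phi /vangle.
    rewrite cos_half_acos // sqr_sqrtr //; case/andP: c_bound => ? _; lra.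
  split=> [w w_neq0|]; last by rewrite hfunE // alignment.
  by rewrite alignment cos_phi vcos_mul_le.
exists (bisector V pv qv).
by rewrite bisector_neq0 ?vangle_bisectorl ?vangle_bisectorr.
Qed.
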